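(* Let $A\ge0$, let $c:S^1_L\to\mathbb R^2$ be an arclength-parametrized immersion with curvature $\kappa$, and consider on $U=\{f\in C^\infty(S^1_L,\mathbb R):\|f\|_\infty<\varepsilon\}$ (for small $\varepsilon>0$) the metric $$G_f(h,k)=\int_{S^1_L}(1+A\kappa_{\psi(f)}^2)\,\frac{hk\,(1-f\kappa)^2}{\sqrt{(1-f\kappa)^2+f'^2}}\,d\theta,\qquad \psi(f)=c+f\,ic'.$$ Define $\Gamma_f$ by $2G_f(\Gamma_f(h,k),l)=dG(f)(l)(h,k)-dG(f)(h)(k,l)-dG(f)(k)(l,h)$ and $$R_f(m,h,m,h)=-d^2G(f)(m,h)(h,m)+\tfrac12d^2G(f)(m,m)(h,h)+\tfrac12d^2G(f)(h,h)(m,m)-G_f(\Gamma_f(h,m),\Gamma_f(m,h))+G_f(\Gamma_f(m,m),\Gamma_f(h,h)),$$ where $dG(f)(l)(h,k)$ and $d^2G(f)(m,l)(h,k)$ denote the first and second derivatives of $f\mapsto G_f(h,k)$ in the directions $l$ and $m,l$. Then at $f=0$: $$\Gamma_0(h,k)=\frac{(\tfrac12\kappa-\tfrac12A\kappa^3+A\kappa'')hk+2A\kappa'(h'k+hk')+2A\kappa h'k'}{1+A\kappa^2},$$ and, with $W=mh'-m'h$, $$R_0(m,h,m,h)=\int_{S^1_L}\frac{-(A\kappa^2-1)^2+4A^2\kappa\kappa''-8A^2\kappa'^2}{2(1+A\kappa^2)}\,W^2\,d\theta+\int_{S^1_L}A\,W'^2\,d\theta.$$ In particular, for $A=0$, $\Gamma_0(h,k)=\tfrac12\kappa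 hk$ and $R_0(m,h,m,h)=-\tfrac12\int_{S^1_L}W^2\,d\theta\le0$, so the sectional curvature $k_0(P(m,h))=-R_0(m,h,m,h)/(G_0(m,m)G_0(h,h)-G_0(m,h)^2)$ is non-negative.
   Context: $S^1_L=\mathbb R/L\mathbb Z$, with $\theta$ the arclength parameter of $c$, so $|c'|\equiv1$; $\mathbb R^2\cong\mathbb C$; primes denote $d/d\theta$. For an immersion $e$, $\kappa_e=\det(e',e'')/|e'|^3$; $\kappa=\kappa_c$. The map $f\mapsto\pi(\psi(f))$ is a chart of the space of unparametrized curves near $\pi(c)$, and $G_f$ is the pullback of the metric $G^A(h,k)=\int(1+A\kappa^2)\langle h,k\rangle|c_\theta|d\theta$ restricted to normal vectors. $h,k,l,m\in C^\infty(S^1_L,\mathbb R)$. *)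

From Stdlib Require Import Reals ClassicalEpsilon.
From Coquelicot Require Import Coquelicot.
Open Scope R_scope.

Definition smooth (g : R -> R) : Prop := forall (n : nat) (x : R), ex_derive_n g n x.
(* functions on S^1_L = R / L Z, viewed as L-periodic functions on R *)
Definition periodic (L : R) (g : R -> R) : Prop := forall x, g (x + L) = g x.
Definition Cinf_per (L : R) (g : R -> R) : Prop := smooth g /\ periodic L g.

Definition circ_int (L : R) (g : R -> R) : R := RInt g 0 L.

Definition curvature (e1 e2 : R -> R) (x : R) : R :=
  (Derive e1 x * Derive_n e2 2 x - Derive e2 x * Derive_n e1 2 x) /
  (sqrt (Derive e1 x ^ 2 + Derive e2 x ^ 2)) ^ 3.

(* psi(f) = c + f * i c', with c = (c1,c2), i c' = (-c2', c1') *)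
Definition psi1 (c1 c2 f : R -> R) (x : R) : R := c1 x - f x * Derive c2 x.
Definition psi2 (c1 c2 f : R -> R) (x : R) : R := c2 x + f x * Derive c1 x.

Definition Gmet (A L : R) (c1 c2 f h k : R -> R) : R :=
  circ_int L (fun x =>
    (1 + A * (curvature (psi1 c1 c2 f) (psi2 c1 c2 f) x) ^ 2) *
    (h x * k x * (1 - f x * curvature c1 c2 x) ^ 2 /
       sqrt ((1 - f x * curvature c1 c2 x) ^ 2 + (Derive f x) ^ 2))).

Definition dG (A L : R) (c1 c2 f l h k : R -> R) : R :=
  Derive (fun t => Gmet A L c1 c2 (fun x => f x + t * l x) h k) 0.

Definition d2G (A L : R) (c1 c2 f m l h k : R -> R) : R :=
  Derive (fun s => dG A L c1 c2 (fun x => f x + s * m x) l h k) 0.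

Definition Gamma (A L : R) (c1 c2 f h k : R -> R) : R -> R :=
  epsilon (inhabits (fun _ : R => 0)) (fun g => Cinf_per L g /\
    forall l, Cinf_per L l ->
      2 * Gmet A L c1 c2 f g l =
        dG A L c1 c2 f l h k - dG A L c1 c2 f h k l - dG A L c1 c2 f k l h).

Definition Curv (A L : R) (c1 c2 f m h : R -> R) : R :=
  - d2G A L c1 c2 f m h h m
  + / 2 * d2G A L c1 c2 f m m h h
  + / 2 * d2G A L c1 c2 f h h m m
  - Gmet A L c1 c2 f (Gamma A L c1 c2 f h m) (Gamma A L c1 c2 f m h)
  + Gmet A L c1 c2 f (Gamma A L c1 c2 f m m) (Gamma A L c1 c2 f h h).

Definition sectional (A L : R) (c1 c2 f m h : R -> R) : R :=
  - Curv A L c1 c2 f m h /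
  (Gmet A L c1 c2 f m m * Gmet A L c1 c2 f h h - (Gmet A L c1 c2 f m h) ^ 2).

Definition lin_indep (m h : R -> R) : Prop :=
  forall a b : R, (forall x, a * m x + b * h x = 0) -> a = 0 /\ b = 0.

(* Along the normal graph psi(F) = c + F i c', the Frenet equations make |psi'|^2 = (1 - F kappa)^2 + F'^2
   and det(psi', psi'') polynomials in the 2-jets of F and kappa, so G_F(h, k) is the integral of an
   explicit algebraic function of these jets. For F = s m + t l the first and second derivatives in s, t
   can be taken under the integral sign, because |psi'| stays away from 0 uniformly for small s, t; at
   s = t = 0 they are integrals of polynomials in the jets of kappa, h, k, m, l. The claimed Gamma_0(h, k)
   satisfies the defining identity of Gamma up to the derivative of a periodic function, and is the only
   solution since G_0 is positive definite. Substituting it, the integrand of R_0(m, h, m, h) agrees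
   pointwise with the claimed one. For A = 0 this gives -1/2 int W^2 <= 0, and the Gram determinant in
   the sectional curvature is nonnegative by Cauchy-Schwarz. *)

From Stdlib Require Import Reals Lra Psatz ClassicalEpsilon FunctionalExtensionality ZArith Lia.
From Coquelicot Require Import Coquelicot.
Open Scope R_scope.

Definition Cn (n : nat) (f : R -> R) : Prop :=
  forall k, (k <= n)%nat -> forall x, ex_derive_n f k x.

Lemma Derive_n_S (f : R -> R) n x : Derive_n f (S n) x = Derive_n (Derive f) n x.
Proof.
  revert x; induction n as [|n IH]; intro x; [reflexivity|].
  change (Derive (Derive_n f (S n)) x = Derive (Derive_n (Derive f) n) x).
  now apply Derive_ext.
Qed.

Lemma Cn_S n f : Cn (S n) f <-> (forall x, ex_derive f x) /\ Cn n (Derive f).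
Proof.
  split.
  - intros H; split.
    + intro x; exact (H 1%nat ltac:(lia) x).
    + intros [|k] Hk x; [exact I|].
      eapply ex_derive_ext; [intro t; apply Derive_n_S|].
      exact (H (S (S k)) ltac:(lia) x).
  - intros [H1 H2] [|[|k]] Hk x; [exact I|exact (H1 x)|].
    eapply ex_derive_ext; [intro t; symmetry; apply Derive_n_S|].
    exact (H2 (S k) ltac:(lia) x).
Qed.

Lemma Cn_le n m f : (m <= n)%nat -> Cn n f -> Cn m f.
Proof. intros Hm H k Hk x; apply H; lia. Qed.

Lemma Cn_ext n f g : (forall x, f x = g x) -> Cn n f -> Cn n g.
Proof. intros E H k Hk x; eapply ex_derive_n_ext; [exact E|now apply H]. Qed.

Lemma Cn_0 f : Cn 0 f.
Proof. intros k Hk x; replace k with 0%nat by lia; exact I. Qed.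

Lemma Cn_const n c : Cn n (fun _ => c).
Proof. intros k Hk x; apply ex_derive_n_const. Qed.

Lemma Cn_plus n : forall f g, Cn n f -> Cn n g -> Cn n (fun x => f x + g x).
Proof.
  induction n as [|n IH]; intros f g Hf Hg; [apply Cn_0|].
  apply Cn_S in Hf as [Hf1 Hf2]; apply Cn_S in Hg as [Hg1 Hg2].
  apply Cn_S; split.
  - intro x; auto_derive; auto.
  - eapply Cn_ext; [|exact (IH _ _ Hf2 Hg2)].
    intro x; symmetry; now apply Derive_plus.
Qed.

Lemma Cn_mult n : forall f g, Cn n f -> Cn n g -> Cn n (fun x => f x * g x).
Proof.
  induction n as [|n IH]; intros f g Hf Hg; [apply Cn_0|].
  pose proof (Cn_le _ n _ (Nat.le_succ_diag_r n) Hf) as Hf0.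
  pose proof (Cn_le _ n _ (Nat.le_succ_diag_r n) Hg) as Hg0.
  apply Cn_S in Hf as [Hf1 Hf2]; apply Cn_S in Hg as [Hg1 Hg2].
  apply Cn_S; split.
  - intro x; auto_derive; auto.
  - eapply Cn_ext; [|exact (Cn_plus _ _ _ (IH _ _ Hf2 Hg0) (IH _ _ Hf0 Hg2))].
    intro x; symmetry; now apply Derive_mult.
Qed.

Lemma Cn_inv n : forall u, Cn n u -> (forall x, u x <> 0) -> Cn n (fun x => / u x).
Proof.
  induction n as [|n IH]; intros u Hu Hne; [apply Cn_0|].
  pose proof (Cn_le _ n _ (Nat.le_succ_diag_r n) Hu) as Hu0.
  apply Cn_S in Hu as [Hu1 Hu2].
  apply Cn_S; split.
  - intro x; auto_derive; auto.
  - pose proof (IH _ Hu0 Hne) as Hv.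
    eapply Cn_ext; [|exact (Cn_mult _ _ _ (Cn_const n (-1)) (Cn_mult _ _ _ Hu2 (Cn_mult _ _ _ Hv Hv)))].
    intro x; rewrite Derive_inv by auto; field; auto.
Qed.

Lemma smooth_Cn f : smooth f <-> forall n, Cn n f.
Proof.
  split; intro H.
  - intros n k Hk x; apply H.
  - intros n x; exact (H n n (Nat.le_refl _) x).
Qed.

Lemma smooth_ex_derive f x : smooth f -> ex_derive f x.
Proof. intro H; exact (H 1%nat x). Qed.

Lemma smooth_continuous f x : smooth f -> continuous f x.
Proof. intro H; exact (ex_derive_continuous f x (smooth_ex_derive f x H)). Qed.

Lemma smooth_Derive f : smooth f -> smooth (Derive f).
Proof.
  rewrite !smooth_Cn; intros H n.
  exact (proj2 (proj1 (Cn_S _ _) (H (S n)))).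
Qed.

Lemma smooth_ext f g : (forall x, f x = g x) -> smooth f -> smooth g.
Proof. rewrite !smooth_Cn; intros E H n; exact (Cn_ext n f g E (H n)). Qed.

Lemma smooth_const c : smooth (fun _ => c).
Proof. rewrite smooth_Cn; intro; apply Cn_const. Qed.

Lemma smooth_plus f g : smooth f -> smooth g -> smooth (fun x => f x + g x).
Proof. rewrite !smooth_Cn; intros; now apply Cn_plus. Qed.

Lemma smooth_mult f g : smooth f -> smooth g -> smooth (fun x => f x * g x).
Proof. rewrite !smooth_Cn; intros; now apply Cn_mult. Qed.

Lemma smooth_opp f : smooth f -> smooth (fun x => - f x).
Proof.
  intro H; apply (smooth_ext (fun x => -1 * f x)); [intro; ring|].
  apply smooth_mult; [apply smooth_const|exact H].
Qed.

Lemma smooth_minus f g : smooth f -> smooth g -> smooth (fun x => f x - g x).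
Proof. intros; apply smooth_plus; [|apply smooth_opp]; assumption. Qed.

Lemma smooth_div f u : smooth f -> smooth u -> (forall x, u x <> 0) -> smooth (fun x => f x / u x).
Proof.
  intros Hf Hu Hne; apply smooth_mult; [exact Hf|].
  revert Hu; rewrite !smooth_Cn; intros Hu n; now apply Cn_inv.
Qed.

Lemma smooth_pow f n : smooth f -> smooth (fun x => f x ^ n).
Proof.
  intro H; induction n; simpl; [apply smooth_const|now apply smooth_mult].
Qed.

Global Hint Resolve smooth_Derive : smooth.

Ltac smooth_tac :=
  repeat match goal with
  | |- smooth (fun _ => ?c) => apply smooth_const
  | |- smooth (fun x => @?f x + @?g x) => apply (smooth_plus f g)
  | |- smooth (fun x => @?f x - @?g x) => apply (smooth_minus f g)
  | |- smooth (fun x => @?f x * @?g x) => apply (smooth_mult f g)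
  | |- smooth (fun x => @?f x / @?g x) => apply (smooth_div f g)
  | |- smooth (fun x => (@?f x) ^ ?n) => apply (smooth_pow f n)
  | |- smooth (fun x => - @?f x) => apply (smooth_opp f)
  | |- smooth (fun x => ?f x) => change (smooth f)
  | |- smooth _ => solve [auto with smooth]
  end.

Lemma periodic_Derive L g : smooth g -> periodic L g -> periodic L (Derive g).
Proof.
  intros Hs Hp x.
  assert (H : is_derive (fun y => g (y + L)) x (Derive g (x + L))).
  { auto_derive; [now apply smooth_ex_derive|apply Rmult_1_l]. }
  rewrite <- (is_derive_unique _ _ _ H).
  apply Derive_ext; intro; apply Hp.
Qed.

Lemma Cinf_per_minus L f g : Cinf_per L f -> Cinf_per L g -> Cinf_per L (fun x => f x - g x).
Proof.
  intros [Sf Pf] [Sg Pg]; split; [now apply smooth_minus|].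
  intro x; now rewrite Pf, Pg.
Qed.

Lemma ex_RInt_smooth f a b : smooth f -> ex_RInt f a b.
Proof. intro H; apply (@ex_RInt_continuous R_CompleteNormedModule); intros; now apply smooth_continuous. Qed.

Ltac eta_contract :=
  repeat match goal with |- context [fun y : R => ?f y] => progress change (fun y : R => f y) with f end.

(* Goals produced by [RInt_ext] are equalities in a normed module whose carrier is only convertible to [R]. *)
Ltac as_R_eq := match goal with |- ?a = ?b => change (@eq R a b) end.

Definition unit_speed (c1 c2 : R -> R) : Prop := forall x, Derive c1 x ^ 2 + Derive c2 x ^ 2 = 1.

Section UnitSpeedCurve.

Variables c1 c2 : R -> R.
Hypotheses (Hc1 : smooth c1) (Hc2 : smooth c2) (Hunit : unit_speed c1 c2).

Local Notation kappa := (curvature c1 c2).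

Lemma curvature_unit_speed x :
  kappa x = Derive c1 x * Derive (Derive c2) x - Derive c2 x * Derive (Derive c1) x.
Proof.
  unfold curvature; rewrite Hunit, sqrt_1.
  change (Derive_n c2 2 x) with (Derive (Derive c2) x).
  change (Derive_n c1 2 x) with (Derive (Derive c1) x).
  field.
Qed.

Lemma unit_speed_orthogonal x :
  Derive c1 x * Derive (Derive c1) x + Derive c2 x * Derive (Derive c2) x = 0.
Proof.
  assert (D : is_derive (fun y => Derive c1 y ^ 2 + Derive c2 y ^ 2) x
     (2 * (Derive c1 x * Derive (Derive c1) x + Derive c2 x * Derive (Derive c2) x))).
  { auto_derive; [repeat split; apply smooth_ex_derive; auto with smooth|simpl; eta_contract; ring]. }
  assert (D0 : is_derive (fun y => Derive c1 y ^ 2 + Derive c2 y ^ 2) x 0).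
  { eapply is_derive_ext; [intro t; symmetry; apply Hunit|]. auto_derive; auto. }
  pose proof (is_derive_unique _ _ _ D) as E; rewrite (is_derive_unique _ _ _ D0) in E; lra.
Qed.

(* Decompose along the unit frame (c', i c'): the tangential component vanishes by orthogonality. *)
Lemma frenet1 x : Derive (Derive c1) x = - kappa x * Derive c2 x.
Proof.
  rewrite curvature_unit_speed.
  pose proof (unit_speed_orthogonal x) as O; pose proof (Hunit x) as U.
  set (u := Derive c1 x) in *; set (v := Derive c2 x) in *.
  set (u1 := Derive (Derive c1) x) in *; set (v1 := Derive (Derive c2) x) in *.
  transitivity (u1 * (u ^ 2 + v ^ 2)); [rewrite U; ring|].
  transitivity (u * (u * u1 + v * v1) - v * (u * v1 - v * u1)); [ring|rewrite O; ring].
Qed.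

Lemma frenet2 x : Derive (Derive c2) x = kappa x * Derive c1 x.
Proof.
  rewrite curvature_unit_speed.
  pose proof (unit_speed_orthogonal x) as O; pose proof (Hunit x) as U.
  set (u := Derive c1 x) in *; set (v := Derive c2 x) in *.
  set (u1 := Derive (Derive c1) x) in *; set (v1 := Derive (Derive c2) x) in *.
  transitivity (v1 * (u ^ 2 + v ^ 2)); [rewrite U; ring|].
  transitivity (v * (u * u1 + v * v1) + u * (u * v1 - v * u1)); [ring|rewrite O; ring].
Qed.

Lemma smooth_curvature : smooth kappa.
Proof.
  apply (smooth_ext (fun x => Derive c1 x * Derive (Derive c2) x - Derive c2 x * Derive (Derive c1) x)).
  - intro x; symmetry; apply curvature_unit_speed.
  - smooth_tac.
Qed.

Local Hint Resolve smooth_curvature : smooth.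

Lemma frenet1_Derive x :
  Derive (Derive (Derive c1)) x = - (Derive kappa x * Derive c2 x + kappa x * (kappa x * Derive c1 x)).
Proof.
  rewrite (Derive_ext _ (fun y => - kappa y * Derive c2 y) x frenet1).
  apply is_derive_unique; auto_derive.
  - repeat split; apply smooth_ex_derive; auto with smooth.
  - eta_contract; rewrite frenet2; ring.
Qed.

Lemma frenet2_Derive x :
  Derive (Derive (Derive c2)) x = Derive kappa x * Derive c1 x + kappa x * (- kappa x * Derive c2 x).
Proof.
  rewrite (Derive_ext _ (fun y => kappa y * Derive c1 y) x frenet2).
  apply is_derive_unique; auto_derive.
  - repeat split; apply smooth_ex_derive; auto with smooth.
  - eta_contract; rewrite frenet1; ring.
Qed.

(* For psi = c + F i c', with (F, F1, F2) the 2-jet of F and (k, k1) that of the curvature: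
   |psi'|^2 = graph_T and det(psi', psi'') = graph_N. *)
Definition graph_T (k F F1 : R) : R := (1 - F * k) ^ 2 + F1 ^ 2.
Definition graph_N (k k1 F F1 F2 : R) : R :=
  (1 - F * k) * ((1 - F * k) * k + F2) + 2 * k * F1 ^ 2 + F * F1 * k1.

(* The integrand of [Gmet] as a function of w = h k, a = 1 - F kappa, N = graph_N, T = graph_T. *)
Definition Psi (A w a N T : R) : R := (1 + A * (N / sqrt T ^ 3) ^ 2) * (w * a ^ 2 / sqrt T).

Lemma normal_graph_det_speed (u v k k1 F F1 F2 : R) : u ^ 2 + v ^ 2 = 1 ->
  let P1 := u - (F1 * v + F * (k * u)) in
  let P2 := v + (F1 * u + F * (- k * v)) in
  let Q1 := - k * v - (F2 * v + F1 * (k * u) + (F1 * (k * u) + F * (k1 * u + k * (- k * v)))) in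
  let Q2 := k * u + (F2 * u + F1 * (- k * v) + (F1 * (- k * v) + F * (- (k1 * v + k * (k * u))))) in
  P1 * Q2 - P2 * Q1 = graph_N k k1 F F1 F2 /\ P1 ^ 2 + P2 ^ 2 = graph_T k F F1.
Proof.
  intros U P1 P2 Q1 Q2; unfold P1, P2, Q1, Q2; split.
  - transitivity ((u ^ 2 + v ^ 2) * graph_N k k1 F F1 F2); [unfold graph_N; ring|rewrite U; ring].
  - transitivity ((u ^ 2 + v ^ 2) * graph_T k F F1); [unfold graph_T; ring|rewrite U; ring].
Qed.

Lemma curvature_normal_graph F x : smooth F ->
  curvature (psi1 c1 c2 F) (psi2 c1 c2 F) x =
  graph_N (kappa x) (Derive kappa x) (F x) (Derive F x) (Derive (Derive F) x)
   / sqrt (graph_T (kappa x) (F x) (Derive F x)) ^ 3.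
Proof.
  intro HF.
  assert (E1 : forall y, Derive (psi1 c1 c2 F) y
                         = Derive c1 y - (Derive F y * Derive c2 y + F y * Derive (Derive c2) y)).
  { intro y; apply is_derive_unique; unfold psi1; auto_derive.
    - repeat split; apply smooth_ex_derive; auto with smooth.
    - eta_contract; ring. }
  assert (E2 : forall y, Derive (psi2 c1 c2 F) y
                         = Derive c2 y + (Derive F y * Derive c1 y + F y * Derive (Derive c1) y)).
  { intro y; apply is_derive_unique; unfold psi2; auto_derive.
    - repeat split; apply smooth_ex_derive; auto with smooth.
    - eta_contract; ring. }
  assert (E1' : Derive (Derive (psi1 c1 c2 F)) x = Derive (Derive c1) x
     - (Derive (Derive F) x * Derive c2 x + Derive F x * Derive (Derive c2) x
        + (Derive F x * Derive (Derive c2) x + F x * Derive (Derive (Derive c2)) x))).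
  { rewrite (Derive_ext _ _ _ E1); apply is_derive_unique; auto_derive.
    - repeat split; apply smooth_ex_derive; auto with smooth.
    - eta_contract; ring. }
  assert (E2' : Derive (Derive (psi2 c1 c2 F)) x = Derive (Derive c2) x
     + (Derive (Derive F) x * Derive c1 x + Derive F x * Derive (Derive c1) x
        + (Derive F x * Derive (Derive c1) x + F x * Derive (Derive (Derive c1)) x))).
  { rewrite (Derive_ext _ _ _ E2); apply is_derive_unique; auto_derive.
    - repeat split; apply smooth_ex_derive; auto with smooth.
    - eta_contract; ring. }
  unfold curvature at 1.
  change (Derive_n (psi2 c1 c2 F) 2 x) with (Derive (Derive (psi2 c1 c2 F)) x).
  change (Derive_n (psi1 c1 c2 F) 2 x) with (Derive (Derive (psi1 c1 c2 F)) x).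
  rewrite E1', E2', E1, E2, frenet1_Derive, frenet2_Derive, frenet1, frenet2.
  destruct (normal_graph_det_speed (Derive c1 x) (Derive c2 x) (kappa x) (Derive kappa x)
      (F x) (Derive F x) (Derive (Derive F) x) (Hunit x)) as [N T].
  now rewrite <- N, <- T.
Qed.

Lemma Gmet_normal_graph A L F h k : smooth F ->
  Gmet A L c1 c2 F h k = RInt (fun x => Psi A (h x * k x) (1 - F x * kappa x)
     (graph_N (kappa x) (Derive kappa x) (F x) (Derive F x) (Derive (Derive F) x))
     (graph_T (kappa x) (F x) (Derive F x))) 0 L.
Proof.
  intro HF; unfold Gmet, circ_int; apply RInt_ext; intros x _.
  unfold Psi; now rewrite curvature_normal_graph.
Qed.

Lemma Gmet_origin A L h k :
  Gmet A L c1 c2 (fun _ : R => 0) h k = RInt (fun x => (1 + A * kappa x ^ 2) * (h x * k x)) 0 L.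
Proof.
  rewrite Gmet_normal_graph by apply smooth_const; apply RInt_ext; intros x _.
  rewrite (Derive_ext (Derive (fun _ : R => 0)) (fun _ => 0)) by (intro; apply Derive_const).
  rewrite !Derive_const; unfold Psi, graph_N, graph_T.
  replace ((1 - 0 * kappa x) ^ 2 + 0 ^ 2) with 1 by ring; rewrite sqrt_1.
  as_R_eq; field.
Qed.

End UnitSpeedCurve.

Global Hint Resolve smooth_curvature : smooth.

Definition Psi_a (A w a N T : R) : R := 2 * w * a * (/ sqrt T + A * N ^ 2 / sqrt T ^ 7).
Definition Psi_N (A w a N T : R) : R := 2 * w * a ^ 2 * A * N / sqrt T ^ 7.
Definition Psi_T (A w a N T : R) : R := w * a ^ 2 * (- (1/2) / sqrt T ^ 3 - (7/2) * A * N ^ 2 / sqrt T ^ 9).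
Definition Psi_aa (A w a N T : R) : R := 2 * w * (/ sqrt T + A * N ^ 2 / sqrt T ^ 7).
Definition Psi_aN (A w a N T : R) : R := 4 * w * a * A * N / sqrt T ^ 7.
Definition Psi_aT (A w a N T : R) : R := 2 * w * a * (- (1/2) / sqrt T ^ 3 - (7/2) * A * N ^ 2 / sqrt T ^ 9).
Definition Psi_NN (A w a N T : R) : R := 2 * w * a ^ 2 * A / sqrt T ^ 7.
Definition Psi_NT (A w a N T : R) : R := -7 * w * a ^ 2 * A * N / sqrt T ^ 9.
Definition Psi_TT (A w a N T : R) : R := w * a ^ 2 * ((3/4) / sqrt T ^ 5 + (63/4) * A * N ^ 2 / sqrt T ^ 11).

Ltac Psi_chain_rule :=
  intros Ha HN HT Hpos;
  unfold Psi, Psi_a, Psi_N, Psi_T, Psi_aa, Psi_aN, Psi_aT, Psi_NN, Psi_NT, Psi_TT;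
  pose proof (Rgt_not_eq _ _ (sqrt_lt_R0 _ Hpos)) as Hr;
  auto_derive;
  [repeat split; repeat first [eexists; eassumption | assumption | lra
                              | apply Rmult_integral_contrapositive_currified]
  |eta_contract;
   rewrite (is_derive_unique _ _ _ Ha), (is_derive_unique _ _ _ HN), (is_derive_unique _ _ _ HT);
   field; exact Hr].

Section PsiChainRule.

Variables (A w : R) (fa fN fT : R -> R) (z da dN dT : R).

Lemma is_derive_Psi :
  is_derive fa z da -> is_derive fN z dN -> is_derive fT z dT -> 0 < fT z ->
  is_derive (fun y => Psi A w (fa y) (fN y) (fT y)) z
   (Psi_a A w (fa z) (fN z) (fT z) * da + Psi_N A w (fa z) (fN z) (fT z) * dN
    + Psi_T A w (fa z) (fN z) (fT z) * dT).
Proof. Psi_chain_rule. Qed.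

Lemma is_derive_Psi_a :
  is_derive fa z da -> is_derive fN z dN -> is_derive fT z dT -> 0 < fT z ->
  is_derive (fun y => Psi_a A w (fa y) (fN y) (fT y)) z
   (Psi_aa A w (fa z) (fN z) (fT z) * da + Psi_aN A w (fa z) (fN z) (fT z) * dN
    + Psi_aT A w (fa z) (fN z) (fT z) * dT).
Proof. Psi_chain_rule. Qed.

Lemma is_derive_Psi_N :
  is_derive fa z da -> is_derive fN z dN -> is_derive fT z dT -> 0 < fT z ->
  is_derive (fun y => Psi_N A w (fa y) (fN y) (fT y)) z
   (Psi_aN A w (fa z) (fN z) (fT z) * da + Psi_NN A w (fa z) (fN z) (fT z) * dN
    + Psi_NT A w (fa z) (fN z) (fT z) * dT).
Proof. Psi_chain_rule. Qed.

Lemma is_derive_Psi_T :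
  is_derive fa z da -> is_derive fN z dN -> is_derive fT z dT -> 0 < fT z ->
  is_derive (fun y => Psi_T A w (fa y) (fN y) (fT y)) z
   (Psi_aT A w (fa z) (fN z) (fT z) * da + Psi_NT A w (fa z) (fN z) (fT z) * dN
    + Psi_TT A w (fa z) (fN z) (fT z) * dT).
Proof. Psi_chain_rule. Qed.

End PsiChainRule.

(* Pointwise data of the variation F = s m + t l: kappa, kappa', w = h k and the 2-jets of m and l. *)
Record jet := mkjet { jk : R; jk1 : R; jw : R; jm0 : R; jm1 : R; jm2 : R; jl0 : R; jl1 : R; jl2 : R }.

Definition comb (p q s t : R) : R := s * p + t * q.
Definition var_a (j : jet) (s t : R) : R := 1 - comb (jm0 j) (jl0 j) s t * jk j.
Definition var_T (j : jet) (s t : R) : R :=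
  graph_T (jk j) (comb (jm0 j) (jl0 j) s t) (comb (jm1 j) (jl1 j) s t).
Definition var_N (j : jet) (s t : R) : R :=
  graph_N (jk j) (jk1 j) (comb (jm0 j) (jl0 j) s t) (comb (jm1 j) (jl1 j) s t) (comb (jm2 j) (jl2 j) s t).

(* Derivatives of [var_T] and [var_N] in the direction with 2-jet (p0, p1, p2); [var_T_st] and [var_N_st]
   are their mixed second derivatives in s and t. *)
Definition var_T_dir (j : jet) (p0 p1 s t : R) : R :=
  2 * var_a j s t * (- p0 * jk j) + 2 * comb (jm1 j) (jl1 j) s t * p1.
Definition var_N_dir (j : jet) (p0 p1 p2 s t : R) : R :=
  (- p0 * jk j) * (var_a j s t * jk j + comb (jm2 j) (jl2 j) s t)
  + var_a j s t * ((- p0 * jk j) * jk j + p2) + 4 * jk j * comb (jm1 j) (jl1 j) s t * p1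
  + (p0 * comb (jm1 j) (jl1 j) s t + comb (jm0 j) (jl0 j) s t * p1) * jk1 j.
Definition var_T_st (j : jet) : R := 2 * (- jm0 j * jk j) * (- jl0 j * jk j) + 2 * jm1 j * jl1 j.
Definition var_N_st (j : jet) : R :=
  (- jl0 j * jk j) * ((- jm0 j * jk j) * jk j + jm2 j) + (- jm0 j * jk j) * ((- jl0 j * jk j) * jk j + jl2 j)
  + 4 * jk j * jm1 j * jl1 j + (jl0 j * jm1 j + jm0 j * jl1 j) * jk1 j.

Definition integrand (A : R) (j : jet) (s t : R) : R :=
  Psi A (jw j) (var_a j s t) (var_N j s t) (var_T j s t).

Definition integrand_t (A : R) (j : jet) (s t : R) : R :=
  Psi_a A (jw j) (var_a j s t) (var_N j s t) (var_T j s t) * (- jl0 j * jk j)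
  + Psi_N A (jw j) (var_a j s t) (var_N j s t) (var_T j s t) * var_N_dir j (jl0 j) (jl1 j) (jl2 j) s t
  + Psi_T A (jw j) (var_a j s t) (var_N j s t) (var_T j s t) * var_T_dir j (jl0 j) (jl1 j) s t.

Definition integrand_st (A : R) (j : jet) (s : R) : R :=
  let a := var_a j s 0 in let N := var_N j s 0 in let T := var_T j s 0 in let w := jw j in
  let a_s := - jm0 j * jk j in
  let N_s := var_N_dir j (jm0 j) (jm1 j) (jm2 j) s 0 in let T_s := var_T_dir j (jm0 j) (jm1 j) s 0 in
  (Psi_aa A w a N T * a_s + Psi_aN A w a N T * N_s + Psi_aT A w a N T * T_s) * (- jl0 j * jk j)
  + ((Psi_aN A w a N T * a_s + Psi_NN A w a N T * N_s + Psi_NT A w a N T * T_s)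
       * var_N_dir j (jl0 j) (jl1 j) (jl2 j) s 0
     + Psi_N A w a N T * var_N_st j)
  + ((Psi_aT A w a N T * a_s + Psi_NT A w a N T * N_s + Psi_TT A w a N T * T_s)
       * var_T_dir j (jl0 j) (jl1 j) s 0
     + Psi_T A w a N T * var_T_st j).

Ltac polynomial_derive :=
  unfold var_T_st, var_N_st, var_T_dir, var_N_dir, var_T, var_N, graph_T, graph_N, var_a, comb;
  auto_derive; auto; ring.

Section JetDerivatives.

Variables (j : jet) (s t : R).

Lemma is_derive_var_a_t : is_derive (fun t => var_a j s t) t (- jl0 j * jk j).
Proof. polynomial_derive. Qed.
Lemma is_derive_var_T_t : is_derive (fun t => var_T j s t) t (var_T_dir j (jl0 j) (jl1 j) s t).
Proof. polynomial_derive. Qed.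
Lemma is_derive_var_N_t : is_derive (fun t => var_N j s t) t (var_N_dir j (jl0 j) (jl1 j) (jl2 j) s t).
Proof. polynomial_derive. Qed.
Lemma is_derive_var_a_s : is_derive (fun s => var_a j s t) s (- jm0 j * jk j).
Proof. polynomial_derive. Qed.
Lemma is_derive_var_T_s : is_derive (fun s => var_T j s t) s (var_T_dir j (jm0 j) (jm1 j) s t).
Proof. polynomial_derive. Qed.
Lemma is_derive_var_N_s : is_derive (fun s => var_N j s t) s (var_N_dir j (jm0 j) (jm1 j) (jm2 j) s t).
Proof. polynomial_derive. Qed.
Lemma is_derive_var_T_dir_s : is_derive (fun s => var_T_dir j (jl0 j) (jl1 j) s 0) s (var_T_st j).
Proof. polynomial_derive. Qed.
Lemma is_derive_var_N_dir_s : is_derive (fun s => var_N_dir j (jl0 j) (jl1 j) (jl2 j) s 0) s (var_N_st j).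
Proof. polynomial_derive. Qed.

End JetDerivatives.

Lemma is_derive_integrand_t A j s t : 0 < var_T j s t ->
  is_derive (fun t => integrand A j s t) t (integrand_t A j s t).
Proof.
  intro HT; apply is_derive_Psi; auto using is_derive_var_a_t, is_derive_var_N_t, is_derive_var_T_t.
Qed.

Lemma is_derive_sum3_mult (f1 g1 f2 g2 f3 g3 : R -> R) z df1 dg1 df2 dg2 df3 dg3 :
  is_derive f1 z df1 -> is_derive g1 z dg1 -> is_derive f2 z df2 -> is_derive g2 z dg2 ->
  is_derive f3 z df3 -> is_derive g3 z dg3 ->
  is_derive (fun y => f1 y * g1 y + f2 y * g2 y + f3 y * g3 y) z
   (df1 * g1 z + f1 z * dg1 + (df2 * g2 z + f2 z * dg2) + (df3 * g3 z + f3 z * dg3)).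
Proof.
  intros H1 H2 H3 H4 H5 H6.
  auto_derive; [repeat split; eexists; eassumption|eta_contract].
  rewrite (is_derive_unique _ _ _ H1), (is_derive_unique _ _ _ H2), (is_derive_unique _ _ _ H3),
    (is_derive_unique _ _ _ H4), (is_derive_unique _ _ _ H5), (is_derive_unique _ _ _ H6).
  ring.
Qed.

Lemma is_derive_integrand_t_s A j s : 0 < var_T j s 0 ->
  is_derive (fun s => integrand_t A j s 0) s (integrand_st A j s).
Proof.
  intro HT.
  pose proof (is_derive_sum3_mult _ (fun _ => - jl0 j * jk j) _ _ _ _ s _ 0 _ _ _ _
    (is_derive_Psi_a A (jw j) _ _ _ s _ _ _
       (is_derive_var_a_s j s 0) (is_derive_var_N_s j s 0) (is_derive_var_T_s j s 0) HT)
    (is_derive_const _ s)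
    (is_derive_Psi_N A (jw j) _ _ _ s _ _ _
       (is_derive_var_a_s j s 0) (is_derive_var_N_s j s 0) (is_derive_var_T_s j s 0) HT)
    (is_derive_var_N_dir_s j s)
    (is_derive_Psi_T A (jw j) _ _ _ s _ _ _
       (is_derive_var_a_s j s 0) (is_derive_var_N_s j s 0) (is_derive_var_T_s j s 0) HT)
    (is_derive_var_T_dir_s j s)) as D.
  rewrite Rmult_0_r, Rplus_0_r in D; exact D.
Qed.

Definition first_variation0 (A : R) (j : jet) : R :=
  jw j * (- jk j * jl0 j + A * jk j ^ 3 * jl0 j + 2 * A * jk j * jl2 j).

Definition second_variation0 (A : R) (j : jet) : R :=
  let k := jk j in
  let a_s := - jm0 j * k in let a_t := - jl0 j * k in
  let T_s := -2 * jm0 j * k in let T_t := -2 * jl0 j * k in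
  let N_s := jm2 j - 2 * k ^ 2 * jm0 j in let N_t := jl2 j - 2 * k ^ 2 * jl0 j in
  jw j * ( 2 * (1 + A * k ^ 2) * a_s * a_t + 4 * A * k * (a_s * N_t + N_s * a_t)
         + (-1 - 7 * A * k ^ 2) * (a_s * T_t + T_s * a_t)
         + 2 * A * N_s * N_t + (-7 * A * k) * (N_s * T_t + T_s * N_t) + (3/4 + 63/4 * A * k ^ 2) * T_s * T_t
         + 2 * A * k * var_N_st j + (-1/2 - 7/2 * A * k ^ 2) * var_T_st j).

Lemma var_at_origin j : var_a j 0 0 = 1 /\ var_T j 0 0 = 1 /\ var_N j 0 0 = jk j.
Proof. unfold var_a, var_T, var_N, graph_T, graph_N, comb; repeat split; ring. Qed.

Lemma integrand_t_origin A j : integrand_t A j 0 0 = first_variation0 A j.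
Proof.
  destruct (var_at_origin j) as (Ea & ET & EN).
  unfold integrand_t, first_variation0, Psi_a, Psi_N, Psi_T.
  rewrite Ea, ET, EN, sqrt_1; unfold var_N_dir, var_T_dir; rewrite Ea; unfold comb; field.
Qed.

Lemma integrand_st_origin A j : integrand_st A j 0 = second_variation0 A j.
Proof.
  destruct (var_at_origin j) as (Ea & ET & EN).
  unfold integrand_st, second_variation0, Psi_a, Psi_N, Psi_T, Psi_aa, Psi_aN, Psi_aT, Psi_NN, Psi_NT, Psi_TT.
  rewrite Ea, ET, EN, sqrt_1; unfold var_N_dir, var_T_dir; rewrite Ea; unfold comb; field.
Qed.

Lemma continuity_2d_pt_restrict f u x : continuity_2d_pt f u x -> continuous (fun v => f u v) x.
Proof.
  intro H; apply continuity_pt_filterlim; intros eps Heps.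
  destruct (H (mkposreal eps Heps)) as [d Hd].
  exists d; split; [apply cond_pos|]; intros y [_ Hy].
  apply (Hd u y); [rewrite Rminus_diag, Rabs_R0; apply cond_pos|exact Hy].
Qed.

(* The margin 1 around [a, b] provides the two-dimensional neighbourhoods required by
   [is_derive_RInt_param]. *)
Lemma is_derive_RInt_param_closed_form (f df : R -> R -> R) (a b u0 d : R) :
  a <= b -> 0 < d ->
  (forall u x, Rabs (u - u0) < d -> a - 1 <= x <= b + 1 -> is_derive (fun u => f u x) u (df u x)) ->
  (forall u x, Rabs (u - u0) < d -> a <= x <= b -> continuity_2d_pt f u x) ->
  (forall x, a <= x <= b -> continuity_2d_pt df u0 x) ->
  is_derive (fun u => RInt (f u) a b) u0 (RInt (df u0) a b).
Proof.
  intros Hab Hd Hder Hf Hdf.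
  rewrite (RInt_ext (df u0) (fun x => Derive (fun u => f u x) u0)).
  2:{ intros x Hx; rewrite Rmin_left, Rmax_right in Hx by exact Hab.
      symmetry; apply is_derive_unique, Hder; [rewrite Rminus_diag, Rabs_R0|]; lra. }
  apply (is_derive_RInt_param f a b u0); rewrite ?Rmin_left, ?Rmax_right by exact Hab.
  - exists (mkposreal d Hd); intros u Hu x Hx; eexists; apply Hder; [exact Hu|lra].
  - intros x Hx; apply (continuity_2d_pt_ext_loc df); [|now apply Hdf].
    exists (mkposreal (Rmin d 1) (Rmin_pos _ _ Hd Rlt_0_1)); intros u v Hu Hv; simpl in Hu, Hv.
    symmetry; apply is_derive_unique, Hder.
    + pose proof (Rmin_l d 1); lra.
    + pose proof (Rmin_r d 1); apply Rabs_def2 in Hv; lra.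
  - exists (mkposreal d Hd); intros u Hu.
    apply (@ex_RInt_continuous R_CompleteNormedModule); intros x Hx.
    rewrite Rmin_left, Rmax_right in Hx by exact Hab.
    now apply continuity_2d_pt_restrict, Hf.
Qed.

Lemma continuity_pt_smooth f x : smooth f -> continuity_pt f x.
Proof. intro H; apply continuity_pt_filterlim, smooth_continuous, H. Qed.

Ltac continuity_2d_tac :=
  repeat match goal with
  | |- continuity_2d_pt (fun u v => @?f u v + @?g u v) _ _ => apply (continuity_2d_pt_plus f g)
  | |- continuity_2d_pt (fun u v => @?f u v - @?g u v) _ _ => apply (continuity_2d_pt_minus f g)
  | |- continuity_2d_pt (fun u v => @?f u v * @?g u v) _ _ => apply (continuity_2d_pt_mult f g)
  | |- continuity_2d_pt (fun u v => @?f u v / @?g u v) _ _ =>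
       apply (continuity_2d_pt_mult f (fun u v => / g u v))
  | |- continuity_2d_pt (fun u v => - @?f u v) _ _ => apply (continuity_2d_pt_opp f)
  | |- continuity_2d_pt (fun u v => / @?f u v) _ _ => apply (continuity_2d_pt_inv f)
  | |- continuity_2d_pt (fun u v => (@?f u v) ^ ?n) _ _ =>
       apply (continuity_1d_2d_pt_comp (fun y => y ^ n) f);
       [apply derivable_continuous_pt, derivable_pt_pow|]
  | |- continuity_2d_pt (fun u v => sqrt (@?f u v)) _ _ =>
       apply (continuity_1d_2d_pt_comp sqrt f);
       [apply continuity_pt_sqrt; cbv beta; unfold graph_T;
        apply Rplus_le_le_0_compat; apply pow2_ge_0|]
  | |- continuity_2d_pt (fun u v => graph_T _ _ _) _ _ => unfold graph_T
  | |- continuity_2d_pt (fun u v => graph_N _ _ _ _ _) _ _ => unfold graph_N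
  | |- continuity_2d_pt (fun u v => comb _ _ _ _) _ _ => unfold comb
  | |- continuity_2d_pt (fun u v => u) _ _ => apply continuity_2d_pt_id1
  | |- continuity_2d_pt (fun u v => v) _ _ => apply continuity_2d_pt_id2
  | |- continuity_2d_pt (fun u v => ?c) _ _ => apply continuity_2d_pt_const
  | |- continuity_2d_pt (fun u v => ?f v) _ _ =>
       apply (continuity_1d_2d_pt_comp f (fun u v => v));
       [apply continuity_pt_smooth; auto with smooth|apply continuity_2d_pt_id2]
  end.

Ltac sqrt_T_nonzero :=
  repeat first [ lra | apply pow_nonzero
               | apply Rgt_not_eq, sqrt_lt_R0; match goal with H : 0 < var_T _ _ _ |- _ => exact H end ].

Ltac unfold_integrand :=
  unfold integrand, integrand_t, integrand_st, Psi, Psi_a, Psi_N, Psi_T, Psi_aa, Psi_aN, Psi_aT,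
    Psi_NN, Psi_NT, Psi_TT, var_N_st, var_T_st, var_N_dir, var_T_dir, var_N, var_T, var_a;
  cbv zeta; cbn [jk jk1 jw jm0 jm1 jm2 jl0 jl1 jl2].

Lemma graph_T_pos k F F1 : Rabs (F * k) < 1 -> 0 < graph_T k F F1.
Proof.
  intro H; unfold graph_T; pose proof (Rle_abs (F * k)); pose proof (pow2_ge_0 F1).
  assert (0 < 1 - F * k) by lra; nra.
Qed.

Section Variation.

Variables (A L : R) (c1 c2 m l h k : R -> R).
Hypotheses (HL : 0 < L) (Hc1 : smooth c1) (Hc2 : smooth c2) (Hunit : unit_speed c1 c2)
  (Hm : smooth m) (Hl : smooth l) (Hh : smooth h) (Hk : smooth k).

Local Notation kappa := (curvature c1 c2).

Definition jet_at (x : R) : jet :=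
  mkjet (kappa x) (Derive kappa x) (h x * k x) (m x) (Derive m x) (Derive (Derive m) x)
        (l x) (Derive l x) (Derive (Derive l) x).

Lemma var_T_pos_near_origin :
  exists d, 0 < d /\ forall s t x, Rabs s < d -> Rabs t < d -> -1 <= x <= L + 1 ->
    0 < var_T (jet_at x) s t.
Proof.
  set (b := fun x => Rabs (m x * kappa x) + Rabs (l x * kappa x)).
  destruct (continuity_ab_maj b (-1) (L + 1)) as [x0 [Hx0 _]]; [lra| |].
  { intros x _; unfold b.
    apply continuity_pt_plus; apply (continuity_pt_comp _ Rabs); try apply Rcontinuity_abs;
      apply continuity_pt_smooth; smooth_tac. }
  set (B := b x0) in Hx0.
  assert (HB : 0 <= B) by (unfold B, b; pose proof (Rabs_pos (m x0 * kappa x0));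
                           pose proof (Rabs_pos (l x0 * kappa x0)); lra).
  exists (/ (4 * (B + 1))); split; [apply Rinv_0_lt_compat; lra|].
  intros s t x Hs Ht Hx; apply graph_T_pos; cbn [jk jm0 jl0 jet_at].
  pose proof (Hx0 x Hx) as Hbx; unfold b in Hbx.
  replace (comb (m x) (l x) s t * kappa x) with (s * (m x * kappa x) + t * (l x * kappa x))
    by (unfold comb; ring).
  eapply Rle_lt_trans; [apply Rabs_triang|]; rewrite (Rabs_mult s), (Rabs_mult t).
  assert (Hd : / (4 * (B + 1)) * (B + 1) = / 4) by (field; lra).
  pose proof (Rabs_pos s); pose proof (Rabs_pos t).
  pose proof (Rabs_pos (m x * kappa x)); pose proof (Rabs_pos (l x * kappa x)).
  assert (Rabs s * Rabs (m x * kappa x) <= / (4 * (B + 1)) * (B + 1)) by (apply Rmult_le_compat; lra).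
  assert (Rabs t * Rabs (l x * kappa x) <= / (4 * (B + 1)) * (B + 1)) by (apply Rmult_le_compat; lra).
  lra.
Qed.

(* The nested form of F is the one produced by unfolding [d2G] and [dG]. *)
Lemma Gmet_variation s t :
  Gmet A L c1 c2 (fun x => (fun x => (fun _ : R => 0) x + s * m x) x + t * l x) h k
  = RInt (fun x => integrand A (jet_at x) s t) 0 L.
Proof.
  set (F := fun x => (fun x => (fun _ : R => 0) x + s * m x) x + t * l x).
  assert (HF : smooth F) by (unfold F; smooth_tac).
  assert (DF : forall y, Derive F y = s * Derive m y + t * Derive l y).
  { intro y; apply is_derive_unique; unfold F; auto_derive.
    - repeat split; now apply smooth_ex_derive.
    - eta_contract; ring. }
  assert (DDF : forall y, Derive (Derive F) y = s * Derive (Derive m) y + t * Derive (Derive l) y).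
  { intro y; rewrite (Derive_ext _ _ y DF); apply is_derive_unique; auto_derive.
    - repeat split; apply smooth_ex_derive; auto with smooth.
    - eta_contract; ring. }
  rewrite Gmet_normal_graph by auto; apply RInt_ext; intros x _.
  rewrite DDF, DF; unfold integrand, var_a, var_N, var_T, comb, F.
  cbn [jk jk1 jw jm0 jm1 jm2 jl0 jl1 jl2 jet_at].
  now rewrite Rplus_0_l.
Qed.

Section NearOrigin.

Variable d : R.
Hypotheses (Hd : 0 < d)
  (HT : forall s t x, Rabs s < d -> Rabs t < d -> -1 <= x <= L + 1 -> 0 < var_T (jet_at x) s t).

Lemma dG_variation s : Rabs s < d ->
  dG A L c1 c2 (fun x => (fun _ : R => 0) x + s * m x) l h k
  = RInt (fun x => integrand_t A (jet_at x) s 0) 0 L.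
Proof.
  intro Hs; unfold dG.
  rewrite (Derive_ext _ (fun t => RInt (fun x => integrand A (jet_at x) s t) 0 L) 0)
    by (intro; apply Gmet_variation).
  apply is_derive_unique.
  apply (is_derive_RInt_param_closed_form (fun t x => integrand A (jet_at x) s t)
           (fun t x => integrand_t A (jet_at x) s t) 0 L 0 d); [lra|exact Hd| | |].
  - intros t x Ht Hx; rewrite Rminus_0_r in Ht.
    apply is_derive_integrand_t, HT; auto; lra.
  - intros t x Ht Hx; rewrite Rminus_0_r in Ht.
    assert (0 < var_T (jet_at x) s t) by (apply HT; auto; lra).
    unfold jet_at; unfold_integrand; continuity_2d_tac; sqrt_T_nonzero.
  - intros x Hx.
    assert (0 < var_T (jet_at x) s 0) by (apply HT; rewrite ?Rabs_R0; auto; lra).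
    unfold jet_at; unfold_integrand; continuity_2d_tac; sqrt_T_nonzero.
Qed.

End NearOrigin.

Lemma d2G_origin :
  d2G A L c1 c2 (fun _ : R => 0) m l h k = RInt (fun x => second_variation0 A (jet_at x)) 0 L.
Proof.
  destruct var_T_pos_near_origin as [d [Hd HT]]; unfold d2G.
  rewrite (Derive_ext_loc _ (fun s => RInt (fun x => integrand_t A (jet_at x) s 0) 0 L) 0).
  2:{ exists (mkposreal d Hd); intros s Hs; apply (dG_variation d Hd HT).
      change (Rabs (s - 0) < d) in Hs; now rewrite Rminus_0_r in Hs. }
  rewrite (RInt_ext _ (fun x => integrand_st A (jet_at x) 0)) by (intros; now rewrite integrand_st_origin).
  apply is_derive_unique.
  apply (is_derive_RInt_param_closed_form (fun s x => integrand_t A (jet_at x) s 0)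
           (fun s x => integrand_st A (jet_at x) s) 0 L 0 d); [lra|exact Hd| | |].
  - intros s x Hs Hx; rewrite Rminus_0_r in Hs.
    apply is_derive_integrand_t_s, HT; rewrite ?Rabs_R0; auto; lra.
  - intros s x Hs Hx; rewrite Rminus_0_r in Hs.
    assert (0 < var_T (jet_at x) s 0) by (apply HT; rewrite ?Rabs_R0; auto; lra).
    unfold jet_at; unfold_integrand; continuity_2d_tac; sqrt_T_nonzero.
  - intros x Hx.
    assert (0 < var_T (jet_at x) 0 0) by (apply HT; rewrite ?Rabs_R0; auto; lra).
    unfold jet_at; unfold_integrand; continuity_2d_tac; sqrt_T_nonzero.
Qed.

End Variation.

Lemma dG_origin A L c1 c2 l h k :
  0 < L -> smooth c1 -> smooth c2 -> unit_speed c1 c2 -> smooth l -> smooth h -> smooth k ->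
  dG A L c1 c2 (fun _ : R => 0) l h k = RInt (fun x => first_variation0 A (jet_at c1 c2 l l h k x)) 0 L.
Proof.
  intros HL Hc1 Hc2 Hunit Hl Hh Hk.
  destruct (var_T_pos_near_origin L c1 c2 l l h k) as [d [Hd HT]]; auto.
  replace (fun _ : R => 0) with (fun x => (fun _ : R => 0) x + 0 * l x)
    by (apply functional_extensionality; intro; ring).
  rewrite (dG_variation A L c1 c2 l l h k) with (d := d) by (auto; rewrite Rabs_R0; lra).
  apply RInt_ext; intros; apply integrand_t_origin.
Qed.

Lemma RInt_plus_smooth f g a b : smooth f -> smooth g ->
  RInt (fun x => f x + g x) a b = RInt f a b + RInt g a b.
Proof. intros Hf Hg; exact (RInt_plus f g a b (ex_RInt_smooth f a b Hf) (ex_RInt_smooth g a b Hg)). Qed.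

Lemma RInt_minus_smooth f g a b : smooth f -> smooth g ->
  RInt (fun x => f x - g x) a b = RInt f a b - RInt g a b.
Proof. intros Hf Hg; exact (RInt_minus f g a b (ex_RInt_smooth f a b Hf) (ex_RInt_smooth g a b Hg)). Qed.

Lemma RInt_scal_smooth f c a b : smooth f -> RInt (fun x => c * f x) a b = c * RInt f a b.
Proof. intro Hf; exact (RInt_scal f a b c (ex_RInt_smooth f a b Hf)). Qed.

Lemma RInt_opp_smooth f a b : smooth f -> RInt (fun x => - f x) a b = - RInt f a b.
Proof. intro Hf; exact (RInt_opp f a b (ex_RInt_smooth f a b Hf)). Qed.

Lemma RInt_Derive_periodic P L : smooth P -> periodic L P -> RInt (Derive P) 0 L = 0.
Proof.
  intros HP Hper; rewrite RInt_Derive.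
  - assert (E : P L = P 0) by (rewrite <- (Rplus_0_l L), Hper; reflexivity).
    rewrite E; apply Rminus_diag_eq; reflexivity.
  - intros; now apply smooth_ex_derive.
  - intros; apply smooth_continuous; auto with smooth.
Qed.

Lemma RInt_nonneg_eq0 (f : R -> R) L : 0 < L -> (forall x, continuous f x) -> (forall x, 0 <= f x) ->
  RInt f 0 L = 0 -> forall x, 0 <= x <= L -> f x = 0.
Proof.
  intros HL Hc Hp HI x0 Hx0.
  destruct (Rle_lt_or_eq_dec 0 (f x0) (Hp x0)) as [Hlt|Heq]; [exfalso|auto].
  pose proof (Hc x0) as C; apply continuity_pt_filterlim in C.
  destruct (C (f x0 / 2) ltac:(lra)) as [d [Hd Hdd]].
  set (a := Rmax 0 (x0 - d / 2)); set (b := Rmin L (x0 + d / 2)).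
  assert (Hab : 0 <= a <= x0 /\ x0 <= b <= L /\ a < b)
    by (unfold a, b, Rmax, Rmin; destruct Rle_dec; destruct Rle_dec; lra).
  assert (Hpos : forall y, a <= y <= b -> f x0 / 2 < f y).
  { intros y Hy.
    assert (Hy' : Rabs (y - x0) < d)
      by (unfold a, b, Rmax, Rmin in Hy; apply Rabs_def1; destruct Rle_dec; destruct Rle_dec; lra).
    destruct (Req_dec y x0) as [->|Hne]; [lra|].
    pose proof (Hdd y (conj (conj I (not_eq_sym Hne)) Hy')) as H; simpl in H; unfold R_dist in H.
    apply Rabs_def2 in H; lra. }
  assert (E : forall u v, ex_RInt f u v) by (intros; apply (@ex_RInt_continuous R_CompleteNormedModule); auto).
  assert (I1 : 0 <= RInt f 0 a) by (apply RInt_ge_0; auto; lra).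
  assert (I3 : 0 <= RInt f b L) by (apply RInt_ge_0; auto; lra).
  assert (I2 : 0 < RInt f a b) by (apply RInt_gt_0; auto; [lra|intros y Hy; pose proof (Hpos y); lra]).
  pose proof (RInt_Chasles f 0 a b (E _ _) (E _ _)) as C1.
  pose proof (RInt_Chasles f 0 b L (E _ _) (E _ _)) as C2.
  change (RInt f 0 a + RInt f a b = RInt f 0 b) in C1.
  change (RInt f 0 b + RInt f b L = RInt f 0 L) in C2.
  lra.
Qed.

Lemma periodic_nat (g : R -> R) L : periodic L g -> forall (n : nat) x, g (x + INR n * L) = g x.
Proof.
  intros Hp n; induction n as [|n IH]; intro x.
  - simpl; f_equal; ring.
  - rewrite S_INR; replace (x + (INR n + 1) * L) with ((x + INR n * L) + L) by ring; rewrite Hp; auto.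
Qed.

Lemma periodic_reduce (g : R -> R) L : 0 < L -> periodic L g -> forall x, exists y, 0 <= y <= L /\ g x = g y.
Proof.
  intros HL Hp x.
  set (z := Int_part (x / L)).
  destruct (base_Int_part (x / L)) as [B1 B2]; fold z in B1, B2.
  assert (Hy1 : IZR z * L <= x).
  { apply (Rmult_le_reg_r (/ L)); [apply Rinv_0_lt_compat; lra|].
    replace (IZR z * L * / L) with (IZR z) by (field; lra); exact B1. }
  assert (Hy2 : x < IZR z * L + L).
  { apply (Rmult_lt_reg_r (/ L)); [apply Rinv_0_lt_compat; lra|].
    replace ((IZR z * L + L) * / L) with (IZR z + 1) by (field; lra); unfold Rdiv in B2; lra. }
  exists (x - IZR z * L); split; [lra|].
  destruct (Z.le_gt_cases 0 z) as [Hz|Hz].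
  - rewrite <- (Z2Nat.id z Hz), <- INR_IZR_INZ, <- (periodic_nat g L Hp (Z.to_nat z) (x - INR (Z.to_nat z) * L)).
    f_equal; ring.
  - replace z with (- Z.of_nat (Z.to_nat (- z)))%Z by lia.
    rewrite opp_IZR, <- INR_IZR_INZ, <- (periodic_nat g L Hp (Z.to_nat (- z)) x).
    f_equal; ring.
Qed.

Definition wronskian (m h : R -> R) (x : R) : R := m x * Derive h x - Derive m x * h x.

Lemma Derive_wronskian m h x : smooth m -> smooth h ->
  Derive (wronskian m h) x = m x * Derive (Derive h) x - Derive (Derive m) x * h x.
Proof.
  intros Sm Sh; apply is_derive_unique; unfold wronskian; auto_derive.
  - repeat split; apply smooth_ex_derive; auto with smooth.
  - eta_contract; ring.
Qed.

Lemma smooth_wronskian m h : smooth m -> smooth h -> smooth (wronskian m h).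
Proof. intros; unfold wronskian; smooth_tac. Qed.

Global Hint Resolve smooth_wronskian : smooth.

Lemma one_plus_A_sqr_pos A y : 0 <= A -> 0 < 1 + A * y ^ 2.
Proof. intro HA; pose proof (pow2_ge_0 y); nra. Qed.

Definition Gamma0 (A : R) (c1 c2 h k : R -> R) (x : R) : R :=
  let kap := curvature c1 c2 in
  ((1/2 * kap x - 1/2 * A * kap x ^ 3 + A * Derive_n kap 2 x) * h x * k x
   + 2 * A * Derive kap x * (Derive h x * k x + h x * Derive k x)
   + 2 * A * kap x * Derive h x * Derive k x) / (1 + A * kap x ^ 2).

Section LeviCivita.

Variables (A L : R) (c1 c2 : R -> R).
Hypotheses (HA : 0 <= A) (HL : 0 < L) (HC1 : Cinf_per L c1) (HC2 : Cinf_per L c2)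
  (Hunit : unit_speed c1 c2).

Local Notation kappa := (curvature c1 c2).

Let Hc1 : smooth c1 := proj1 HC1.
Let Hc2 : smooth c2 := proj1 HC2.

Lemma periodic_curvature : periodic L kappa.
Proof.
  pose proof HC1 as [_ P1]; pose proof HC2 as [_ P2]; intro x.
  rewrite !curvature_unit_speed by auto.
  rewrite (periodic_Derive L c1), (periodic_Derive L c2), (periodic_Derive L (Derive c1)),
    (periodic_Derive L (Derive c2)); auto with smooth; now apply periodic_Derive.
Qed.

Ltac smooth_jet_tac :=
  unfold Gamma0, first_variation0, second_variation0, var_N_st, var_T_st, jet_at, wronskian; cbv zeta;
  cbn [jk jk1 jw jm0 jm1 jm2 jl0 jl1 jl2];
  change (Derive_n kappa 2) with (Derive (Derive kappa)); smooth_tac;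
  intro; apply Rgt_not_eq;
  first [apply one_plus_A_sqr_pos, HA | apply Rmult_gt_0_compat; [lra|apply one_plus_A_sqr_pos, HA]].

Lemma Gamma0_Cinf_per h k : Cinf_per L h -> Cinf_per L k -> Cinf_per L (Gamma0 A c1 c2 h k).
Proof.
  intros [Sh Ph] [Sk Pk]; split; [smooth_jet_tac|].
  pose proof periodic_curvature as PK.
  assert (PK1 := periodic_Derive L _ (smooth_curvature _ _ Hc1 Hc2 Hunit) PK).
  intro x; unfold Gamma0; cbv zeta; change (Derive_n kappa 2) with (Derive (Derive kappa)).
  now rewrite PK, PK1, (periodic_Derive L (Derive kappa)), Ph, (periodic_Derive L h), Pk, (periodic_Derive L k)
    by auto with smooth.
Qed.

(* Integration by parts, in the form of a total derivative of a periodic function. *)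
Lemma Gamma0_spec h k : Cinf_per L h -> Cinf_per L k -> forall l, Cinf_per L l ->
  2 * Gmet A L c1 c2 (fun _ : R => 0) (Gamma0 A c1 c2 h k) l =
    dG A L c1 c2 (fun _ : R => 0) l h k - dG A L c1 c2 (fun _ : R => 0) h k l
    - dG A L c1 c2 (fun _ : R => 0) k l h.
Proof.
  intros [Sh Ph] [Sk Pk] l [Sl Pl].
  rewrite Gmet_origin, !dG_origin by auto.
  set (P := fun x => 2 * A * (Derive l x * (kappa x * h x * k x)
     - l x * (Derive kappa x * h x * k x + kappa x * Derive h x * k x + kappa x * h x * Derive k x))).
  assert (E : RInt (fun x => first_variation0 A (jet_at c1 c2 l l h k x)
     - first_variation0 A (jet_at c1 c2 h h k l x) - first_variation0 A (jet_at c1 c2 k k l h x)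
     - 2 * ((1 + A * kappa x ^ 2) * (Gamma0 A c1 c2 h k x * l x))) 0 L = 0).
  { rewrite (RInt_ext _ (Derive P)).
    - apply RInt_Derive_periodic; [unfold P; smooth_tac|].
      pose proof periodic_curvature as PK.
      intro x; unfold P.
      now rewrite PK, (periodic_Derive L kappa), Ph, (periodic_Derive L h), Pk, (periodic_Derive L k),
        Pl, (periodic_Derive L l) by auto with smooth.
    - intros x _; symmetry; apply is_derive_unique; unfold P; auto_derive.
      + repeat split; apply smooth_ex_derive; auto with smooth.
      + eta_contract; unfold first_variation0, jet_at, Gamma0; cbv zeta; cbn [jk jk1 jw jl0 jl1 jl2].
        change (Derive_n kappa 2 x) with (Derive (Derive kappa) x).
        as_R_eq; field; apply Rgt_not_eq, one_plus_A_sqr_pos, HA. }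
  rewrite !RInt_minus_smooth, RInt_scal_smooth in E by smooth_jet_tac.
  lra.
Qed.

(* Uniqueness: [G_0] is positive definite since 1 + A kappa^2 > 0. *)
Lemma Gamma_origin h k : Cinf_per L h -> Cinf_per L k ->
  Gamma A L c1 c2 (fun _ : R => 0) h k = Gamma0 A c1 c2 h k.
Proof.
  intros Hh Hk; pose proof (Gamma0_Cinf_per h k Hh Hk) as H0.
  unfold Gamma; apply functional_extensionality.
  match goal with |- forall x, epsilon ?i ?P x = _ =>
    assert (HP : P (epsilon i P))
      by (apply epsilon_spec; exists (Gamma0 A c1 c2 h k); split; [exact H0|now apply Gamma0_spec]);
    set (G := epsilon i P) in * end.
  destruct HP as [HG Hspec].
  set (l := fun y => G y - Gamma0 A c1 c2 h k y).
  assert (Hl : Cinf_per L l) by now apply Cinf_per_minus.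
  destruct HG as [SG _]; destruct H0 as [S0 _].
  set (q := fun y => (1 + A * kappa y ^ 2) * (l y * l y)).
  assert (Hq : RInt q 0 L = 0).
  { pose proof (Hspec l Hl) as E; rewrite <- (Gamma0_spec h k Hh Hk l Hl), !Gmet_origin in E by auto.
    rewrite (RInt_ext _ (fun y => (1 + A * kappa y ^ 2) * (G y * l y)
                                  - (1 + A * kappa y ^ 2) * (Gamma0 A c1 c2 h k y * l y)))
      by (intros; unfold q, l; as_R_eq; ring).
    rewrite RInt_minus_smooth by (unfold l; smooth_tac); lra. }
  intro x; destruct (periodic_reduce l L HL (proj2 Hl) x) as [y [Hy Ey]].
  assert (Zq : q y = 0).
  { apply (RInt_nonneg_eq0 q L HL); auto.
    - intro z; apply smooth_continuous; unfold q, l; smooth_tac.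
    - intro z; apply Rmult_le_pos; [left; now apply one_plus_A_sqr_pos|apply Rle_0_sqr]. }
  unfold q in Zq; apply Rmult_integral in Zq as [Zq|Zq].
  - pose proof (one_plus_A_sqr_pos A (kappa y) HA); lra.
  - apply Rmult_integral in Zq as [Zq|Zq]; unfold l in Ey, Zq; lra.
Qed.

Lemma Curv_origin m h : Cinf_per L m -> Cinf_per L h ->
  Curv A L c1 c2 (fun _ : R => 0) m h =
    circ_int L (fun x => (- (A * kappa x ^ 2 - 1) ^ 2 + 4 * A ^ 2 * kappa x * Derive_n kappa 2 x
                          - 8 * A ^ 2 * Derive kappa x ^ 2) / (2 * (1 + A * kappa x ^ 2)) * wronskian m h x ^ 2)
    + circ_int L (fun x => A * Derive (wronskian m h) x ^ 2).
Proof.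
  intros Hm Hh; pose proof Hm as [Sm _]; pose proof Hh as [Sh _].
  unfold Curv, circ_int.
  rewrite !d2G_origin, !Gmet_origin, !Gamma_origin by auto.
  rewrite (RInt_ext (fun x => A * Derive (wronskian m h) x ^ 2)
             (fun x => A * (m x * Derive (Derive h) x - Derive (Derive m) x * h x) ^ 2))
    by (intros; now rewrite Derive_wronskian).
  repeat first [ rewrite <- RInt_opp_smooth by smooth_jet_tac
               | rewrite <- RInt_scal_smooth by smooth_jet_tac
               | rewrite <- RInt_plus_smooth by smooth_jet_tac
               | rewrite <- RInt_minus_smooth by smooth_jet_tac ].
  apply RInt_ext; intros x _.
  unfold second_variation0, var_N_st, var_T_st, jet_at, Gamma0, wronskian; cbv zeta;
    cbn [jk jk1 jw jm0 jm1 jm2 jl0 jl1 jl2].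
  change (Derive_n kappa 2 x) with (Derive (Derive kappa) x).
  as_R_eq; field; apply Rgt_not_eq, one_plus_A_sqr_pos, HA.
Qed.

End LeviCivita.

Lemma discriminant_nonpos a b c : 0 <= c -> (forall t, 0 <= a - 2 * t * b + t ^ 2 * c) -> b ^ 2 <= a * c.
Proof.
  intros Hc H; destruct (Rle_lt_or_eq_dec 0 c Hc) as [Hc'|<-].
  - specialize (H (b / c)).
    replace (a - 2 * (b / c) * b + (b / c) ^ 2 * c) with ((a * c - b ^ 2) / c) in H by (field; lra).
    apply Rmult_le_compat_r with (r := c) in H; [|lra].
    unfold Rdiv in H; rewrite Rmult_assoc, Rinv_l, Rmult_0_l in H by lra; lra.
  - destruct (Req_dec b 0) as [->|Hb]; [lra|exfalso].
    specialize (H ((a + 1) / (2 * b))).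
    replace (a - 2 * ((a + 1) / (2 * b)) * b + ((a + 1) / (2 * b)) ^ 2 * 0) with (-1) in H by (field; auto).
    lra.
Qed.

Lemma RInt_Cauchy_Schwarz (w a b : R -> R) L : 0 < L -> smooth w -> smooth a -> smooth b ->
  (forall x, 0 <= w x) ->
  RInt (fun x => w x * (a x * b x)) 0 L ^ 2
  <= RInt (fun x => w x * (a x * a x)) 0 L * RInt (fun x => w x * (b x * b x)) 0 L.
Proof.
  intros HL Sw Sa Sb Hw.
  apply discriminant_nonpos.
  - apply RInt_ge_0; [lra|apply ex_RInt_smooth; smooth_tac|].
    intros; apply Rmult_le_pos; [apply Hw|apply Rle_0_sqr].
  - intro t.
    rewrite <- !RInt_scal_smooth, <- RInt_minus_smooth, <- RInt_plus_smooth by smooth_tac.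
    apply RInt_ge_0; [lra|apply ex_RInt_smooth; smooth_tac|intros x _].
    replace (w x * (a x * a x) - 2 * t * (w x * (a x * b x)) + t ^ 2 * (w x * (b x * b x)))
      with (w x * ((a x - t * b x) * (a x - t * b x))) by ring.
    apply Rmult_le_pos; [apply Hw|apply Rle_0_sqr].
Qed.

Section FlatMetric.

Variables (L : R) (c1 c2 : R -> R).
Hypotheses (HL : 0 < L) (HC1 : Cinf_per L c1) (HC2 : Cinf_per L c2) (Hunit : unit_speed c1 c2).

Lemma Curv_origin_flat m h : Cinf_per L m -> Cinf_per L h ->
  Curv 0 L c1 c2 (fun _ : R => 0) m h = - (1/2) * circ_int L (fun x => wronskian m h x ^ 2).
Proof.
  intros Hm Hh; pose proof Hm as [Sm _]; pose proof Hh as [Sh _].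
  rewrite Curv_origin by (auto; lra); unfold circ_int.
  rewrite (RInt_scal_smooth _ 0), Rmult_0_l, Rplus_0_r by smooth_tac.
  rewrite <- RInt_scal_smooth by smooth_tac.
  apply RInt_ext; intros x _; as_R_eq; field.
Qed.

Lemma Curv_origin_flat_nonpos m h : Cinf_per L m -> Cinf_per L h ->
  Curv 0 L c1 c2 (fun _ : R => 0) m h <= 0.
Proof.
  intros Hm Hh; pose proof Hm as [Sm _]; pose proof Hh as [Sh _].
  rewrite Curv_origin_flat by auto.
  assert (0 <= circ_int L (fun x => wronskian m h x ^ 2)); [|lra].
  apply RInt_ge_0; [lra|apply ex_RInt_smooth; smooth_tac|intros; apply pow2_ge_0].
Qed.

(* Division by zero yields 0 in Rocq, so no independence assumption on [m] and [h] is needed. *)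
Lemma sectional_origin_flat_nonneg m h : Cinf_per L m -> Cinf_per L h ->
  0 <= sectional 0 L c1 c2 (fun _ : R => 0) m h.
Proof.
  intros Hm Hh; pose proof Hm as [Sm _]; pose proof Hh as [Sh _].
  pose proof HC1 as [Sc1 _]; pose proof HC2 as [Sc2 _].
  pose proof (Curv_origin_flat_nonpos m h Hm Hh) as Hneg.
  unfold sectional; rewrite !Gmet_origin by auto.
  match goal with |- 0 <= _ / (?Gmm * ?Ghh - ?Gmh ^ 2) =>
    assert (Hgram : 0 <= Gmm * Ghh - Gmh ^ 2)
      by (cut (Gmh ^ 2 <= Gmm * Ghh); [lra|];
          apply RInt_Cauchy_Schwarz; [exact HL|smooth_tac..|intro; lra]) end.
  unfold Rdiv; apply Rmult_le_pos; [lra|].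
  destruct (Rle_lt_or_eq_dec 0 _ Hgram) as [Hpos|<-].
  - now apply Rlt_le, Rinv_0_lt_compat.
  - rewrite Rinv_0; lra.
Qed.

End FlatMetric.

Theorem mainTheorem18 (A L : R) (c1 c2 : R -> R) :
  0 <= A -> 0 < L ->
  Cinf_per L c1 -> Cinf_per L c2 ->
  (forall x, Derive c1 x ^ 2 + Derive c2 x ^ 2 = 1) ->
  let kap := curvature c1 c2 in
  let f0 := fun _ : R => 0 in
  (forall h k : R -> R, Cinf_per L h -> Cinf_per L k -> forall x,
     Gamma A L c1 c2 f0 h k x =
       ((1/2 * kap x - 1/2 * A * kap x ^ 3 + A * Derive_n kap 2 x) * h x * k x
        + 2 * A * Derive kap x * (Derive h x * k x + h x * Derive k x)
        + 2 * A * kap x * Derive h x * Derive k x) / (1 + A * kap x ^ 2)) /\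
  (forall m h : R -> R, Cinf_per L m -> Cinf_per L h ->
     let W := fun x => m x * Derive h x - Derive m x * h x in
     Curv A L c1 c2 f0 m h =
       circ_int L (fun x =>
         (- (A * kap x ^ 2 - 1) ^ 2 + 4 * A ^ 2 * kap x * Derive_n kap 2 x
          - 8 * A ^ 2 * Derive kap x ^ 2) / (2 * (1 + A * kap x ^ 2)) * W x ^ 2)
       + circ_int L (fun x => A * Derive W x ^ 2)) /\
  (A = 0 ->
     (forall h k : R -> R, Cinf_per L h -> Cinf_per L k -> forall x,
        Gamma A L c1 c2 f0 h k x = 1/2 * kap x * h x * k x) /\
     (forall m h : R -> R, Cinf_per L m -> Cinf_per L h ->
        let W := fun x => m x * Derive h x - Derive m x * h x in
        Curv A L c1 c2 f0 m h = - (1/2) * circ_int L (fun x => W x ^ 2) /\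
        Curv A L c1 c2 f0 m h <= 0 /\
        (lin_indep m h -> 0 <= sectional A L c1 c2 f0 m h))).
Proof.
  intros HA HL HC1 HC2 Hunit; cbv zeta.
  split; [|split].
  - intros h k Hh Hk x; now rewrite Gamma_origin.
  - intros m h Hm Hh; exact (Curv_origin A L c1 c2 HA HL HC1 HC2 Hunit m h Hm Hh).
  - intros ->; split.
    + intros h k Hh Hk x; rewrite Gamma_origin by (auto; lra).
      unfold Gamma0; cbv zeta; field.
    + intros m h Hm Hh; split; [|split].
      * exact (Curv_origin_flat L c1 c2 HL HC1 HC2 Hunit m h Hm Hh).
      * exact (Curv_origin_flat_nonpos L c1 c2 HL HC1 HC2 Hunit m h Hm Hh).
      * intros _; exact (sectional_origin_flat_nonneg L c1 c2 HL HC1 HC2 Hunit m h Hm Hh).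
Qed.
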